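(* Let $\mathbf p$ be a probability vector with strictly positive entries. For every $\sigma\in\mathcal B$ there exist a constant $c>0$ and a sequence of triples $(R,r,\mathbf i)\in(0,1)\times(0,1)\times\Sigma$ with $R/r\to\infty$ such that for every triple in the sequence \[ \frac{\mu_{\mathbf p}(B_{\mathbf i}(R))}{\mu_{\mathbf p}(B_{\mathbf i}(r))}\ge c\Big(\frac Rr\Big)^{\overline S(\mathbf p,\sigma)}. \]
   Context: Setting: $\mathcal I=\{1,\dots,N\}$, $f_i(x)=A_ix+t_i$ on $\mathbb R^d$ with $A_i=\mathrm{diag}(\lambda_i^{(1)},\dots,\lambda_i^{(d)})$, all $\lambda_i^{(n)}\in(0,1)$, $f_i([0,1]^d)\subset[0,1]^d$, no two maps agree on $[0,1]^d$, and for all $m\ne n$ some $i$ has $\lambda_i^{(n)}\ne\lambda_i^{(m)}$. $\Sigma=\mathcal I^{\mathbb N}$, $\mu_{\mathbf p}=\mathbf p^{\mathbb N}$. For $\mathbf i\in\Sigma$, $r>0$, $L_{\mathbf i}(r,n)$ is the unique integer with $\prod_{\ell=1}^{L_{\mathbf i}(r,n)}\lambda_{i_\ell}^{(n)}\le r<\prod_{\ell=1}^{L_{\mathbf i}(r,n)-1}\lambda_{i_\ell}^{(n)}$. For a permutation $\sigma$ of $\{1,\dots,d\}$: $\mathbf i$ determines a strictly $\sigma$-ordered cylinder at scale $r$ if, with $L=L_{\mathbf i}(r,\sigma_d)$, $\prod_{\ell=1}^L\lambda_{i_\ell}^{(\sigma_d)}<\dots<\prod_{\ell=1}^L\lambda_{i_\ell}^{(\sigma_1)}$;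 $\mathcal B$ is the set of $\sigma$ realised in this way by some $\mathbf i,r$. $\mathbf i$ determines a $\sigma$-ordered cube at scale $r$ if $L_{\mathbf i}(r,\sigma_d)\le\dots\le L_{\mathbf i}(r,\sigma_1)$, ties resolved by: if coordinates $k<m$ have $L_{\mathbf i}(r,k)=L_{\mathbf i}(r,m)$ then $k$ precedes $m$ iff $\prod_{\ell=1}^{L_{\mathbf i}(r,k)}\lambda_{i_\ell}^{(k)}\ge\prod_{\ell=1}^{L_{\mathbf i}(r,k)}\lambda_{i_\ell}^{(m)}$; write $\sigma_{\mathbf i}(r)$ for this ordering. $E_n^\sigma$: span of coordinate axes $\sigma_1,\dots,\sigma_n$; $f_i,f_j$ overlap exactly on $E_n^\sigma$ if their orthogonal projections onto $E_n^\sigma$ agree on $[0,1]^d$. For $1\le n\le d-1$, $\mathcal I_n^\sigma$ is the set of $j$ such that no $i<j$ overlaps exactly with $j$ on $E_n^\sigma$; $\mathcal I_d^\sigma=\mathcal I$; $\Pi_n^\sigma j$ is the unique element of $\mathcal I_n^\sigma$ overlapping exactly with $j$ on $E_n^\sigma$ ($\Pi_d^\sigma=\mathrm{id}$, $\Pi_0^\sigma j=\emptyset$), extended to $\Sigma$ coordinatewise. $p_n^\sigma(i)=\sum_{j:\Pi_n^\sigma j=i}p(j)$, $p_0^\sigma(\emptyset)=1$, $P^\sigma_{n-1}(i)=p_n^\sigma(i)/p^\sigma_{n-1}(\Pi^\sigma_{n-1}i)$ for $i\in\mathcal I_n^\sigma$, and $\overline S(\mathbf p,\sigma)=\sum_{n=1}^d\max_{i\in\mathcal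 I_n^\sigma}\frac{\log P^\sigma_{n-1}(i)}{\log\lambda_i^{(\sigma_n)}}$. $B_{\mathbf i}(r)=\{\mathbf j\in\Sigma:|\Pi_\tau\mathbf j\wedge\Pi_\tau\mathbf i|\ \text{conditions}\}$ is defined as $\{\mathbf j:|\Pi_n^{\tau}\mathbf j\wedge\Pi_n^{\tau}\mathbf i|\ge L_{\mathbf i}(r,\tau_n)\ \forall n\}$ with $\tau=\sigma_{\mathbf i}(r)$ and $\wedge$ the longest common prefix. *)

From HB Require Import structures.
From mathcomp Require Import all_boot all_order all_algebra all_fingroup.
From mathcomp Require Import all_classical all_reals all_analysis.
Set Implicit Arguments.
Unset Strict Implicit.
Unset Printing Implicit Defensive.
Import Order.TTheory GRing.Theory Num.Theory.
Local Open Scope ring_scope.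

(* Symbolic space Sigma = I^N, with I = 'I_N (0-based indices, order kept). *)
Definition Sigma (N : nat) := nat -> 'I_N.

Section Carpets.
Variable R : realType.
Variables N d : nat.
(* The ambient dimension is d.+1; coordinates are 'I_d.+1
   (coordinate n of the paper, 1 <= n <= d+1, is the ordinal n-1). *)
Notation I := 'I_N.
Notation C := 'I_d.+1.
Variables lam t : I -> C -> R.   (* A_i = diag(lam i), translation t i *)

Definition ucube (x : C -> R) : Prop := forall c, 0 <= x c <= 1.

Definition affmap (i : I) (x : C -> R) : C -> R := fun c => lam i c * x c + t i c.

Definition prodlam (w : Sigma N) (c : C) (L : nat) : R :=
  \prod_(l < L) lam (w l) c.

(* L_w(r,c): least L with prodlam w c L <= r (for 0<r<1 this is the unique
   integer with prod_{1..L} <= r < prod_{1..L-1}). *)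
Definition Lidx (w : Sigma N) (r : R) (c : C) : nat :=
  match pselect (exists L, prodlam w c L <= r) with
  | left h => @ex_minn (fun L => prodlam w c L <= r) h
  | right _ => 0%N
  end.

Definition strict_ordered (s : {perm C}) (w : Sigma N) (r : R) : Prop :=
  let L := Lidx w r (s ord_max) in
  forall a b : C, (a < b)%N -> prodlam w (s b) L < prodlam w (s a) L.

Definition inB (s : {perm C}) : Prop :=
  exists (w : Sigma N) (r : R), 0 < r /\ strict_ordered s w r.

Definition prec (w : Sigma N) (r : R) (k m : C) : bool :=
  (Lidx w r m < Lidx w r k)%N ||
  ((Lidx w r k == Lidx w r m) &&
   (if (k < m)%N then prodlam w m (Lidx w r k) <= prodlam w k (Lidx w r k)
    else prodlam w m (Lidx w r k) < prodlam w k (Lidx w r k))).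

Definition cube_order (w : Sigma N) (r : R) : {perm C} :=
  odflt 1%g [pick s : {perm C} | [forall a : C, forall b : C,
                                   (a < b)%N ==> prec w r (s a) (s b)]].

(* f_i, f_j overlap exactly on E_n^s = span of axes s_1..s_n
   (0-based: s a for a < n) *)
Definition overlapE (s : {perm C}) (n : nat) (i j : I) : Prop :=
  forall x, ucube x -> forall a : C, (a < n)%N -> affmap i x (s a) = affmap j x (s a).

Definition InI (s : {perm C}) (n : nat) (j : I) : bool :=
  (n == d.+1) || [forall i : I, (i < j)%N ==> ~~ `[< overlapE s n i j >]].

Definition Pi (s : {perm C}) (n : nat) (j : I) : I :=
  if n == d.+1 then j
  else odflt j [pick i : I | InI s n i && `[< overlapE s n i j >]].

Variable p : I -> R.

Definition pn (s : {perm C}) (n : nat) (i : I) : R :=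
  \sum_(j : I | Pi s n j == i) p j.

(* P_{n-1}^s(i) = p_n^s(i) / p_{n-1}^s(Pi_{n-1}^s i), with p_0 = 1 *)
Definition Pcond (s : {perm C}) (n : nat) (i : I) : R :=
  if n == 1%N then pn s 1 i else pn s n i / pn s n.-1 (Pi s n.-1 i).

(* \overline S(p, s); the paper's index n = k+1, s_n = s k *)
Definition Sbar (s : {perm C}) : R :=
  \sum_(k < d.+1)
    \big[Num.max/0]_(i : I | InI s k.+1 i)
       (ln (Pcond s k.+1 i) / ln (lam i (s k))).

Definition Bset (w : Sigma N) (r : R) : Sigma N -> Prop :=
  fun v => let tau := cube_order w r in
    forall (k : C) (l : nat), (l < Lidx w r (tau k))%N ->
      Pi tau k.+1 (v l) = Pi tau k.+1 (w l).

Definition maxL (w : Sigma N) (r : R) : nat := \max_(c : C) Lidx w r c.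

(* Bernoulli measure mu_p of a set S determined by the first K symbols:
   sum of prod p over the length-K words whose cylinder lies in S. *)
Definition extend (K : nat) (u : {ffun 'I_K -> I}) (w0 : Sigma N) : Sigma N :=
  fun l => match (insub l : option 'I_K) with Some o => u o | None => w0 l end.

Definition cylmeas (K : nat) (S : Sigma N -> Prop) (w0 : Sigma N) : R :=
  \sum_(u : {ffun 'I_K -> I} | `[< S (extend u w0) >]) \prod_(l < K) p (u l).

(* mu_p(B_w(r)); B_w(r) depends only on the first maxL w r symbols *)
Definition muB (w : Sigma N) (r : R) : R := cylmeas (maxL w r) (Bset w r) w.

End Carpets.

From Pilot Require Import Defs.
From HB Require Import structures.
From mathcomp Require Import all_boot all_order all_algebra all_fingroup.
From mathcomp Require Import all_classical all_reals all_analysis.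
From mathcomp Require Import lra.
Import Order.TTheory GRing.Theory Num.Theory.
Local Open Scope classical_set_scope.
Local Open Scope ring_scope.
Set Implicit Arguments.
Unset Strict Implicit.
Unset Printing Implicit Defensive.

(* Since [s] is in [B], some finite word [u] contracts the coordinates [s 0], ..., [s d]
   at strictly increasing logarithmic rates, so that for [j < m] the rate of [s j] is at
   most [th] times that of [s m], with [th < 1].  Given a gap [D], build a word treating
   the coordinates from [s d] down to [s 0]: append copies of [u] until coordinate [s m]
   is about to reach the logarithmic scale [T], then copies of a letter [I m] attaining
   the [m]-th maximum in [Sbar] until it passes [T + D].  The untreated coordinates grow
   at most [th] times as fast, so for [T] large they are still below [T] when their turn
   comes.  At the scales [R = e^-T] and [r = e^-(T+D)] both cube orderings are then [s],
   and between its two indices [L(R)] and [L(r)] each coordinate [s m] sees a run of the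
   letter [I m], these runs being disjoint.  The measure of [B_w(.)] is a product over
   positions: a position in the run of [s m] contributes [1 / P_m(I m)] to the ratio
   [mu(B(R)) / mu(B(r))] and every other position at least [1]; the run is long enough
   for these factors to multiply to [e^(-Sbar bmax) (R/r)^Sbar]. *)

Lemma ler_sum_subset (R : numDomainType) (I : finType) (P Q : pred I) (F : I -> R) :
  (forall i, 0 <= F i) -> (forall i, P i -> Q i) ->
  \sum_(i | P i) F i <= \sum_(i | Q i) F i.
Proof.
move=> F_ge0 PQ; rewrite [leLHS]big_mkcond [leRHS]big_mkcond ler_sum // => i _.
by case: (boolP (P i)) => [/PQ ->|_] //; case: ifP.
Qed.

Lemma perm_incr_id n (q : {perm 'I_n}) : {homo q : a b / (a < b)%N} -> q = 1%g.
Proof.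
move=> q_incr; pose ltI := relpre (@nat_of_ord n) ltn.
have enum_sorted : sorted ltI (enum 'I_n).
  by rewrite -sorted_map val_enum_ord iota_ltn_sorted.
have : map q (enum 'I_n) = enum 'I_n.
  have := homo_sorted (e := ltI) (e' := ltI) q_incr _ enum_sorted.
  move/(irr_sorted_eq (leT := ltI))/(_ enum_sorted); apply.
  - by move=> ? ? ?; apply: ltn_trans.
  - by move=> ?; apply: ltnn.
  - by move=> a; rewrite mem_enum; apply/mapP; exists (q^-1 a)%g; rewrite ?mem_enum ?permKV.
rewrite -[RHS]map_id => /eq_in_map q_id; apply/permP => a.
by rewrite perm1 q_id // mem_enum.
Qed.

Lemma prod_nat_window (R : comNzRingType) (K a b : nat) (x : R) : (a <= b <= K)%N ->
  \prod_(0 <= l < K) (if (a <= l < b)%N then x else 1) = x ^+ (b - a).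
Proof.
case/andP=> ab bK; rewrite (@big_cat_nat _ _ _ b 0 K) //= (@big_cat_nat _ _ _ a 0 b) //=.
rewrite [X in _ * X]big_nat_cond [X in _ * _ * X]big1 => [|l /andP[/andP[bl _] _]]; last first.
  by rewrite ltnNge bl andbF.
rewrite big_nat_cond big1 => [|l /andP[/andP[_ la] _]]; last by rewrite leqNgt la.
by rewrite mul1r mulr1 -prodr_const_nat; apply: eq_big_nat => l ->.
Qed.

Lemma exists_crossing (R : archiRealFieldType) (q0 T a : R) : 0 < a -> q0 < T ->
  exists k : nat, q0 + k%:R * a < T <= q0 + k.+1%:R * a.
Proof.
move=> a_gt0 q0T.
have crossed : exists k : nat, T <= q0 + k.+1%:R * a.
  have Ta_ge0 : 0 <= (T - q0) / a by rewrite divr_ge0 ?ltW // subr_gt0.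
  exists (Num.Def.archi_bound ((T - q0) / a)).
  have := archi_boundP Ta_ge0; rewrite ltr_pdivrMr // ltrBlDl => /ltW /le_trans; apply.
  by rewrite lerD2l ler_pM2r // ler_nat.
case: (ex_minnP crossed) => k kT k_min; exists k; rewrite kT andbT.
case: k kT k_min => [|k] kT k_min; first by rewrite mul0r addr0.
by rewrite ltNge; apply/negP => /k_min; rewrite ltnn.
Qed.

Lemma exists_contraction_margin (R : realFieldType) (th a b : R) :
  0 <= th < 1 -> 0 <= a -> 0 <= b -> exists2 T, 0 < T & th * (T + a) + b < T.
Proof.
case/andP=> th_ge0 th_lt1 a_ge0 b_ge0; have th1_gt0 : 0 < 1 - th by rewrite subr_gt0.
exists ((th * a + b + 1) / (1 - th)).
  by rewrite divr_gt0 // ltr_wpDl // addr_ge0 // mulr_ge0.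
have : (th * a + b + 1) / (1 - th) * (1 - th) = th * a + b + 1 by rewrite divfK ?lt0r_neq0.
lra.
Qed.

Section FiniteBounds.
Variables (R : realDomainType) (T : finType) (f : T -> R).

Lemma fin_ub : exists2 b, 0 <= b & forall x, f x <= b.
Proof. by exists (\big[Num.max/0]_x f x) => [|x]; [exact: bigmax_ge_id | exact: le_bigmax]. Qed.

Lemma fin_ub_lt c : 0 < c -> (forall x, f x < c) -> exists2 b, 0 <= b < c & forall x, f x <= b.
Proof.
move=> c_gt0 f_lt; exists (\big[Num.max/0]_x f x) => [|x]; last exact: le_bigmax.
by rewrite bigmax_ge_id bigmax_lt.
Qed.

Lemma fin_lb_gt0 : (forall x, 0 < f x) -> exists2 b, 0 < b & forall x, b <= f x.
Proof.
by move=> f_gt0; exists (\big[Num.min/1]_x f x) => [|x]; [rewrite lt_bigmin | exact: bigmin_le].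
Qed.

End FiniteBounds.

Lemma increasing_ratio_bound (R : realFieldType) n (f : 'I_n -> R) :
  (forall j, 0 < f j) -> (forall j m : 'I_n, (j < m)%N -> f j < f m) ->
  exists2 th, 0 <= th < 1 & forall j m : 'I_n, (j < m)%N -> f j <= th * f m.
Proof.
move=> f_gt0 f_incr.
pose ratio (jm : 'I_n * 'I_n) := if (jm.1 < jm.2)%N then f jm.1 / f jm.2 else 0.
have [th th_bounds th_ub] : exists2 th, 0 <= th < 1 & forall jm, ratio jm <= th.
  apply: fin_ub_lt ltr01 _ => jm; rewrite /ratio; case: ifP => // jm_lt.
  by rewrite ltr_pdivrMr // mul1r f_incr.
by exists th => // j m jm; have := th_ub (j, m); rewrite /ratio /= jm ler_pdivrMr.
Qed.

Section OverlapClasses.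
Variables (R : realType) (N d : nat) (lam t : 'I_N -> 'I_d.+1 -> R).
Variable s : {perm 'I_d.+1}.
Hypothesis Hdist : forall i j : 'I_N, i <> j ->
  ~ (forall x, ucube x -> affmap lam t i x = affmap lam t j x).

Local Notation ov n := (overlapE lam t s n).
Local Notation InI n := (InI lam t s n).
Local Notation Pi n := (Pi lam t s n).

Lemma overlapE_sym n i j : ov n i j -> ov n j i.
Proof. by move=> h x hx a ha; rewrite h. Qed.

Lemma overlapE_trans n i j k : ov n i j -> ov n j k -> ov n i k.
Proof. by move=> h1 h2 x hx a ha; rewrite h1 ?h2. Qed.

Lemma overlapE_le m n i j : (m <= n)%N -> ov n i j -> ov m i j.
Proof. by move=> mn h x hx a ha; apply: h => //; apply: leq_trans mn. Qed.

Lemma overlapE_full i j : ov d.+1 i j -> i = j.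
Proof.
move=> h; apply/eqP/negPn/negP => /eqP ij; apply: (Hdist ij) => x hx.
by apply/funext => c; rewrite -(permKV s c); apply: h.
Qed.

Lemma InIE n j : n != d.+1 ->
  InI n j = [forall i : 'I_N, (i < j)%N ==> ~~ `[< ov n i j >]].
Proof. by rewrite /Defs.InI => /negbTE ->. Qed.

Lemma PiP n j : (n <= d.+1)%N -> InI n (Pi n j) /\ ov n (Pi n j) j.
Proof.
rewrite /Defs.Pi; case: eqP => [-> _|/eqP n_full _]; first by rewrite /Defs.InI eqxx.
case: pickP => [i /andP[? /asboolP] //|no_rep]; exfalso.
have jj : `[< ov n j j >] by apply/asboolP.
case: (arg_minnP (P := fun i => `[< ov n i j >]) (fun i : 'I_N => nat_of_ord i) jj).
move=> i /asboolP ij i_min.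
move/negP: (no_rep i); apply; apply/andP; split; last exact/asboolP.
rewrite InIE //; apply/forallP => k; apply/implyP => ki; apply/negP => /asboolP kj.
by have := i_min k (asboolT (overlapE_trans kj ij)); rewrite leqNgt ki.
Qed.

Lemma InI_overlapE_eq n a b : (n <= d.+1)%N -> InI n a -> InI n b -> ov n a b -> a = b.
Proof.
move=> nd; case: (eqVneq n d.+1) => [-> _ _|n_full]; first exact: overlapE_full.
rewrite !InIE // => /forallP ha /forallP hb ab.
case: (ltngtP a b) => [lt|gt|/val_inj //].
- by move/implyP/(_ lt)/negP: (hb a); case; apply/asboolP.
- by move/implyP/(_ gt)/negP: (ha b); case; apply/asboolP/overlapE_sym.
Qed.

Lemma Pi_eq n a b : (n <= d.+1)%N -> Pi n a = Pi n b <-> ov n a b.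
Proof.
move=> nd; have [ia oa] := PiP a nd; have [ib ob] := PiP b nd; split=> [e|ab].
  by apply: overlapE_trans (overlapE_sym oa) _; rewrite e.
apply: InI_overlapE_eq ia ib _ => //.
exact: overlapE_trans oa (overlapE_trans ab (overlapE_sym ob)).
Qed.

Lemma Pi_id n i : (n <= d.+1)%N -> InI n i -> Pi n i = i.
Proof. by move=> nd ii; have [iPi oPi] := PiP i nd; apply: InI_overlapE_eq iPi ii oPi. Qed.

Variable p : 'I_N -> R.
Hypothesis Hp : forall i, 0 < p i.
Hypothesis Hp1 : \sum_(i : 'I_N) p i = 1.

Definition class_mass n i := \sum_(j | `[< ov n i j >]) p j.

Lemma class_mass_gt0 n i : 0 < class_mass n i.
Proof.
rewrite /class_mass (bigD1 i) /=; last exact/asboolP.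
by rewrite ltr_pwDl // sumr_ge0 // => j _; apply: ltW.
Qed.

Lemma class_mass_overlapE n i i' : ov n i i' -> class_mass n i = class_mass n i'.
Proof.
move=> ii'; apply: eq_bigl => j; apply/asboolP/asboolP => h.
  exact: overlapE_trans (overlapE_sym ii') h.
exact: overlapE_trans ii' h.
Qed.

Lemma class_mass0 i : class_mass 0 i = 1.
Proof. by rewrite -Hp1; apply: eq_bigl => j; apply/asboolP. Qed.

Lemma class_mass_succ_le n i : class_mass n.+1 i <= class_mass n i.
Proof.
apply: ler_sum_subset => [j|j /asboolP h]; first exact: ltW.
exact/asboolP/(overlapE_le (leqnSn n)).
Qed.

Lemma pn_class_mass n i : (n <= d.+1)%N -> InI n i -> pn lam t p s n i = class_mass n i.
Proof.
move=> nd ii; apply: eq_bigl => j; rewrite -{1}(Pi_id nd ii).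
apply/eqP/asboolP => [/(Pi_eq _ _ nd) /overlapE_sym //|/overlapE_sym ji].
exact/(Pi_eq _ _ nd).
Qed.

Lemma Pcond_class_mass k i : (k < d.+1)%N -> InI k.+1 i ->
  Pcond lam t p s k.+1 i = class_mass k.+1 i / class_mass k i.
Proof.
move=> kd ii; rewrite /Pcond (pn_class_mass kd ii); case: k kd ii => [|k] kd ii /=.
  by rewrite class_mass0 divr1 (pn_class_mass kd ii).
have [iPi oPi] := PiP i (ltnW kd).
by rewrite (pn_class_mass (ltnW kd) iPi) (class_mass_overlapE oPi).
Qed.

Hypothesis Hlam : forall i c, 0 < lam i c < 1.

Definition Sbar_term (k : 'I_d.+1) i := ln (Pcond lam t p s k.+1 i) / ln (lam i (s k)).

Lemma Sbar_term_ge0 (k : 'I_d.+1) i : InI k.+1 i -> 0 <= Sbar_term k i.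
Proof.
move=> ii; rewrite /Sbar_term Pcond_class_mass //; apply: mulr_le0.
  by rewrite ln_le0 // ler_pdivrMr ?class_mass_gt0 // mul1r class_mass_succ_le.
by rewrite invr_le0 ltW // ln_lt0 // Hlam.
Qed.

Lemma class_mass_ratioE (k : 'I_d.+1) i : InI k.+1 i ->
  class_mass k i / class_mass k.+1 i = expR (Sbar_term k i * - ln (lam i (s k))).
Proof.
move=> ii; have ln_lam_neq0 : ln (lam i (s k)) != 0 by rewrite ltr0_neq0 // ln_lt0 // Hlam.
have ratio_gt0 : 0 < class_mass k.+1 i / class_mass k i by rewrite divr_gt0 ?class_mass_gt0.
rewrite /Sbar_term Pcond_class_mass // mulrN divfK // -lnV ?posrE // invf_div lnK // posrE.
by rewrite divr_gt0 ?class_mass_gt0.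
Qed.

Lemma Sbar_max_attained (k : 'I_d.+1) (i0 : 'I_N) : exists i, InI k.+1 i /\
  \big[Num.max/0]_(i | InI k.+1 i) Sbar_term k i = Sbar_term k i.
Proof.
have [ii _] := PiP i0 (ltn_ord k).
by have [i i_in i_max] := eq_bigmax _ (InI k.+1) (Sbar_term k) ii (@Sbar_term_ge0 k); exists i.
Qed.

End OverlapClasses.

Section Scales.
Variables (R : realType) (N d : nat) (lam : 'I_N -> 'I_d.+1 -> R).
Hypothesis Hlam : forall i c, 0 < lam i c < 1.

Local Notation prodlam := (prodlam lam).
Local Notation Lidx := (Lidx lam).

Lemma prodlam_gt0 w c L : 0 < prodlam w c L.
Proof. by apply: prodr_gt0 => l _; case/andP: (Hlam (w l) c). Qed.

Lemma prodlamS w c L : prodlam w c L.+1 = prodlam w c L * lam (w L) c.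
Proof. by rewrite /Defs.prodlam big_ord_recr. Qed.

Lemma prodlam_split w c L L' : (L <= L')%N ->
  prodlam w c L' = prodlam w c L * \prod_(L <= l < L') lam (w l) c.
Proof.
move=> LL'; rewrite /Defs.prodlam -!(big_mkord xpredT (fun l => lam (w l) c)).
exact: (@big_cat_nat _ _ _ L 0 L').
Qed.

Lemma prodlam_le w c L L' : (L <= L')%N -> prodlam w c L' <= prodlam w c L.
Proof.
move=> LL'; rewrite (prodlam_split _ _ LL') ler_piMr ?(ltW (prodlam_gt0 _ _ _)) //.
by apply: prodr_ile1 => l _; case/andP: (Hlam (w l) c) => /ltW -> /ltW ->.
Qed.

Lemma Lidx_leP w r c L0 L : prodlam w c L0 <= r ->
  (Lidx w r c <= L)%N = (prodlam w c L <= r).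
Proof.
move=> L0r; rewrite /Defs.Lidx; case: pselect => [ex|]; last by case; exists L0.
case: ex_minnP => m mr m_min; apply/idP/idP => [mL|/m_min //].
exact: le_trans (prodlam_le w c mL) mr.
Qed.

Lemma prodlam_Lidx_le w r c L0 : prodlam w c L0 <= r -> prodlam w c (Lidx w r c) <= r.
Proof. by move=> L0r; rewrite -(Lidx_leP _ L0r). Qed.

Lemma Lidx_le_anti w r1 r2 c L0 : r1 <= r2 -> prodlam w c L0 <= r1 ->
  (Lidx w r2 c <= Lidx w r1 c)%N.
Proof.
move=> r12 L0r1; rewrite (Lidx_leP _ (le_trans L0r1 r12)).
exact: le_trans (prodlam_Lidx_le L0r1) r12.
Qed.

Lemma prec_Lidx_le w r x y : prec lam w r x y -> (Lidx w r y <= Lidx w r x)%N.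
Proof. by case/orP=> [/ltnW //|/andP[/eqP -> _]]. Qed.

Lemma cube_order_eq (s : {perm 'I_d.+1}) w r :
  (forall a b : 'I_d.+1, (a < b)%N -> (Lidx w r (s b) < Lidx w r (s a))%N) ->
  cube_order lam w r = s.
Proof.
move=> s_decr; rewrite /cube_order; case: pickP => [s' /forallP s'_prec|no_order] /=.
  pose q := (s' * s^-1)%g.
  have sq a : s (q a) = s' a by rewrite permM permKV.
  suff q1 : q = 1%g by apply/permP => a; rewrite -sq q1 perm1.
  apply: perm_incr_id => a b ab; rewrite ltnNge leq_eqVlt; apply/negP.
  case/orP=> [/eqP/val_inj/perm_inj ba|ba]; first by move: ab; rewrite ba ltnn.
  have := s_decr _ _ ba; rewrite !sq ltnNge.
  by move/forallP/(_ b)/implyP/(_ ab)/prec_Lidx_le: (s'_prec a) => ->.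
suff s_ordered : [forall a : 'I_d.+1, forall b : 'I_d.+1, (a < b)%N ==> prec lam w r (s a) (s b)].
  by move: (no_order s) => /=; rewrite s_ordered.
apply/forallP => a; apply/forallP => b; apply/implyP => ab.
by rewrite /prec s_decr.
Qed.

Lemma Lidx_window_gt w c r R1 i B L0 : 0 < r -> r <= R1 -> prodlam w c L0 <= r ->
  (0 < Lidx w R1 c)%N ->
  (forall l, (Lidx w R1 c <= l < Lidx w r c)%N -> w l = i) ->
  (forall j, - ln (lam j c) <= B) ->
  ln R1 - ln r - B < (Lidx w r c - Lidx w R1 c)%:R * - ln (lam i c).
Proof.
move=> r_gt0 rR1 L0r LR_gt0 window B_ub.
set LR := Lidx w R1 c; set Lr := Lidx w r c.
have R1_gt0 : 0 < R1 := lt_le_trans r_gt0 rR1.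
have lam_gt0 j : 0 < lam j c by case/andP: (Hlam j c).
have Lr_split : prodlam w c Lr = prodlam w c LR * lam i c ^+ (Lr - LR).
  rewrite (prodlam_split _ _ (Lidx_le_anti rR1 L0r)) -prodr_const_nat.
  by congr (_ * _); apply: eq_big_nat => l /window ->.
have LR_split : prodlam w c LR = prodlam w c LR.-1 * lam (w LR.-1) c.
  by rewrite -prodlamS prednK.
have R1_lt : R1 < prodlam w c LR.-1.
  by rewrite ltNge -(Lidx_leP _ (le_trans L0r rR1)) -ltnNge prednK.
(* The last letter before the window overshoots the scale [R1] by at most [B]. *)
have lam_ge : expR (- B) <= lam (w LR.-1) c.
  by rewrite -[lam _ _]lnK ?posrE // ler_expR lerNl.
have key : R1 * expR (- B) * lam i c ^+ (Lr - LR) < r.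
  apply: lt_le_trans (prodlam_Lidx_le L0r); rewrite Lr_split LR_split ltr_pM2r ?exprn_gt0 //.
  apply: lt_le_trans (_ : prodlam w c LR.-1 * expR (- B) <= _).
    by rewrite ltr_pM2r ?expR_gt0.
  by rewrite ler_pM2l ?prodlam_gt0.
move: key; rewrite -[R1]lnK ?posrE // -[r in _ < r]lnK ?posrE // -[lam i c]lnK ?posrE //.
by rewrite -expRM_natl -!expRD ltr_expR !expRK mulrN; lra.
Qed.

End Scales.

Section BernoulliFactorisation.
Variables (R : realType) (N d : nat) (lam t : 'I_N -> 'I_d.+1 -> R) (p : 'I_N -> R).
Hypothesis Hdist : forall i j : 'I_N, i <> j ->
  ~ (forall x, ucube x -> affmap lam t i x = affmap lam t j x).
Hypothesis Hp : forall i, 0 < p i.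
Hypothesis Hp1 : \sum_(i : 'I_N) p i = 1.

Local Notation Lidx := (Lidx lam).
Local Notation mass s := (class_mass lam t s p).

(* [B_w(r)] is a product set over positions; [Bletter w r l] is its constraint at [l]. *)
Definition Bletter (w : Sigma N) (r : R) (l : nat) (a : 'I_N) : bool :=
  [forall k : 'I_d.+1, (l < Lidx w r (cube_order lam w r k))%N ==>
     (Pi lam t (cube_order lam w r) k.+1 a == Pi lam t (cube_order lam w r) k.+1 (w l))].

Definition Bfactor w r l := \sum_(a | Bletter w r l a) p a.

Lemma Lidx_le_maxL w r c : (Lidx w r c <= maxL lam w r)%N.
Proof. exact: leq_bigmax. Qed.

Lemma extend_ord K (u : {ffun 'I_K -> 'I_N}) w0 (l : 'I_K) : extend u w0 l = u l.
Proof. by rewrite /extend valK. Qed.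

Lemma Bset_extendE w r (u : {ffun 'I_(maxL lam w r) -> 'I_N}) :
  Bset lam t w r (extend u w) <-> forall l : 'I_(maxL lam w r), Bletter w r l (u l).
Proof.
split=> [Bu l|Bu tau k l lk].
  by apply/forallP => k; apply/implyP => lk; apply/eqP; rewrite -(extend_ord u w); apply: Bu.
have lM : (l < maxL lam w r)%N := leq_trans lk (Lidx_le_maxL _ _ _).
move/forallP/(_ k)/implyP/(_ lk)/eqP: (Bu (Ordinal lM)).
by rewrite -(extend_ord u w (Ordinal lM)).
Qed.

Lemma Bfactor_eq1 w r l : (maxL lam w r <= l)%N -> Bfactor w r l = 1.
Proof.
move=> Ml; rewrite /Bfactor -Hp1; apply: eq_bigl => a.
apply/forallP => k; apply/implyP => lk.
by have := leq_trans lk (Lidx_le_maxL _ _ _); rewrite ltnNge Ml.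
Qed.

Lemma muB_prod w r K : (maxL lam w r <= K)%N ->
  muB lam t p w r = \prod_(0 <= l < K) Bfactor w r l.
Proof.
move=> MK; rewrite /muB /cylmeas; set M := maxL lam w r.
pose F (l : 'I_M) (a : 'I_N) := if Bletter w r l a then p a else 0.
transitivity (\sum_(u : {ffun 'I_M -> 'I_N}) \prod_(l < M) F l (u l)).
  rewrite big_mkcond; apply: eq_bigr => u _; case: asboolP => [/Bset_extendE Bu|].
    by apply: eq_bigr => l _; rewrite /F Bu.
  move/Bset_extendE/forallP; rewrite negb_forall => /existsP[l /negbTE Bl].
  by rewrite (bigD1 l) //= /F Bl mul0r.
rewrite -bigA_distr_bigA (@big_cat_nat _ _ _ M) //= [X in _ * X]big_nat_cond.
rewrite [X in _ * X]big1 ?mulr1 => [|l /andP[/andP[Ml _] _]]; last exact: Bfactor_eq1.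
by rewrite big_mkord; apply: eq_bigr => l _; rewrite /Bfactor [RHS]big_mkcond.
Qed.

Lemma Bfactor_gt0 w r l : 0 < Bfactor w r l.
Proof.
rewrite /Bfactor (bigD1 (w l)) /=; last by apply/forallP => k; apply/implyP.
by rewrite ltr_pwDl // sumr_ge0 // => a _; apply: ltW.
Qed.

Lemma Bfactor_antitone w r1 r2 l : cube_order lam w r1 = cube_order lam w r2 ->
  (forall c, (Lidx w r1 c <= Lidx w r2 c)%N) -> Bfactor w r2 l <= Bfactor w r1 l.
Proof.
move=> o12 L12; apply: ler_sum_subset => [a|a /forallP B2]; first exact: ltW.
apply/forallP => k; apply/implyP => lk; rewrite o12.
by move/implyP: (B2 k); rewrite -o12; apply; apply: leq_trans lk _.
Qed.

Lemma class_mass_le_Bfactor (s : {perm 'I_d.+1}) w r (n : 'I_d.+1) l :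
  cube_order lam w r = s ->
  (forall k : 'I_d.+1, (n <= k)%N -> (Lidx w r (s k) <= Lidx w r (s n))%N) ->
  (Lidx w r (s n) <= l)%N -> mass s n (w l) <= Bfactor w r l.
Proof.
move=> o s_decr nl; apply: ler_sum_subset => [a|a /asboolP ov]; first exact: ltW.
apply/forallP => k; apply/implyP; rewrite o => lk.
have kn : (k < n)%N.
  by rewrite ltnNge; apply/negP => /s_decr kn; rewrite ltnNge (leq_trans kn nl) in lk.
by apply/eqP/Pi_eq => //; apply/overlapE_sym/(overlapE_le kn).
Qed.

Lemma Bfactor_le_class_mass (s : {perm 'I_d.+1}) w r (n : 'I_d.+1) l :
  cube_order lam w r = s -> (l < Lidx w r (s n))%N -> Bfactor w r l <= mass s n.+1 (w l).
Proof.
move=> o ln; apply: ler_sum_subset => [a|a /forallP/(_ n)]; first exact: ltW.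
by rewrite o ln => /eqP/(Pi_eq s Hdist _ _ (ltn_ord n)) ov; apply/asboolP/overlapE_sym.
Qed.

Lemma muB_ratio_ge (s : {perm 'I_d.+1}) w R1 r1 (I : 'I_d.+1 -> 'I_N) :
  let LR n := Lidx w R1 (s n) in let Lr n := Lidx w r1 (s n) in
  cube_order lam w R1 = s -> cube_order lam w r1 = s ->
  (forall c, (Lidx w R1 c <= Lidx w r1 c)%N) ->
  (forall a b : 'I_d.+1, (a < b)%N -> (Lr b <= LR a)%N) ->
  (forall (n : 'I_d.+1) l, (LR n <= l < Lr n)%N -> w l = I n) ->
  \prod_(n < d.+1) (mass s n (I n) / mass s n.+1 (I n)) ^+ (Lr n - LR n)
    <= muB lam t p w R1 / muB lam t p w r1.
Proof.
move=> LR Lr oR or LRr ordered window.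
have LR_decr (n k : 'I_d.+1) : (n <= k)%N -> (LR k <= LR n)%N.
  rewrite leq_eqVlt => /orP[/eqP/val_inj -> //|nk].
  exact: leq_trans (LRr _) (ordered _ _ nk).
have windows_disjoint (n k : 'I_d.+1) l :
    (LR n <= l < Lr n)%N -> (LR k <= l < Lr k)%N -> n = k.
  move=> /andP[nl ln] /andP[kl lk]; case: (ltngtP n k) => [nk|kn|/val_inj //].
  - by have := leq_trans lk (ordered _ _ nk); rewrite ltnNge nl.
  - by have := leq_trans ln (ordered _ _ kn); rewrite ltnNge kl.
set K := maxn (maxL lam w R1) (maxL lam w r1).
rewrite (muB_prod (K := K)) ?leq_maxl // (muB_prod (K := K) (r := r1)) ?leq_maxr //.
have Lr_le_K n : (LR n <= Lr n <= K)%N.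
  by rewrite LRr (leq_trans (Lidx_le_maxL _ _ _) (leq_maxr _ _)).
rewrite -prodf_div; under [X in X <= _]eq_bigr => n _ do rewrite -(prod_nat_window _ (Lr_le_K n)).
rewrite exchange_big /=; apply: ler_prod => l _; apply/andP; split.
  apply: prodr_ge0 => n _; case: ifP => // _.
  by rewrite divr_ge0 // ltW // class_mass_gt0.
case: (pickP (fun n : 'I_d.+1 => LR n <= l < Lr n)%N) => [n ln|no_window].
  rewrite (bigD1 n) //= ln big1 ?mulr1 => [|k kn]; last first.
    by case: ifP => // lk; case/eqP: kn; apply: windows_disjoint lk ln.
  case/andP: ln => nl ln; rewrite -(window n l) ?nl ?ln //.
  apply: ler_pM; rewrite ?invr_ge0 ?(ltW (class_mass_gt0 _ _ _ _ _ _)) //.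
    by apply: class_mass_le_Bfactor oR _ nl => k /LR_decr.
  by rewrite lef_pV2 ?posrE ?class_mass_gt0 ?Bfactor_gt0 // Bfactor_le_class_mass.
rewrite big1 => [|n _]; last by rewrite no_window.
by rewrite ler_pdivlMr ?Bfactor_gt0 // mul1r Bfactor_antitone // oR or.
Qed.

End BernoulliFactorisation.

Section LogContraction.
Variables (R : realType) (N d : nat) (lam : 'I_N -> 'I_d.+1 -> R).
Hypothesis Hlam : forall i c, 0 < lam i c < 1.

Definition logcontr (v : seq 'I_N) (c : 'I_d.+1) : R := \sum_(x <- v) - ln (lam x c).

Lemma nln_lam_gt0 i c : 0 < - ln (lam i c).
Proof. by rewrite oppr_gt0 ln_lt0 // Hlam. Qed.

Lemma nln_lam_bounds : exists bmin bmax, [/\ 0 < bmin, 0 <= bmax,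
  forall i c, bmin <= - ln (lam i c) & forall i c, - ln (lam i c) <= bmax].
Proof.
have [bmin bmin_gt0 bmin_lb] := fin_lb_gt0 (fun ic : 'I_N * 'I_d.+1 => nln_lam_gt0 ic.1 ic.2).
have [bmax bmax_ge0 bmax_ub] := fin_ub (fun ic : 'I_N * 'I_d.+1 => - ln (lam ic.1 ic.2)).
by exists bmin, bmax; split=> // i c; [exact: (bmin_lb (i, c)) | exact: (bmax_ub (i, c))].
Qed.

Lemma logcontr_nil c : logcontr [::] c = 0.
Proof. exact: big_nil. Qed.

Lemma logcontr_cat v1 v2 c : logcontr (v1 ++ v2) c = logcontr v1 c + logcontr v2 c.
Proof. exact: big_cat. Qed.

Lemma logcontr_ge0 v c : 0 <= logcontr v c.
Proof. by apply: sumr_ge0 => x _; apply/ltW/nln_lam_gt0. Qed.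

Lemma logcontr_gt0 v c : v != [::] -> 0 < logcontr v c.
Proof.
case: v => // x v _; rewrite /logcontr big_cons.
exact: ltr_pwDl (nln_lam_gt0 _ _) (logcontr_ge0 _ _).
Qed.

Lemma logcontr_nseq m i c : logcontr (nseq m i) c = m%:R * - ln (lam i c).
Proof. by rewrite /logcontr big_nseq iter_addr_0 mulr_natl. Qed.

Lemma logcontr_repeat k v c : logcontr (flatten (nseq k v)) c = k%:R * logcontr v c.
Proof.
elim: k => [|k IH]; first by rewrite logcontr_nil mul0r.
by rewrite /= logcontr_cat IH mulrSr addrC mulrDl mul1r.
Qed.

Lemma prodlam_logcontr (i0 : 'I_N) v c L : (L <= size v)%N ->
  prodlam lam (nth i0 v) c L = expR (- logcontr (take L v) c).
Proof.
elim: L => [|L IH] Lv; first by rewrite take0 logcontr_nil oppr0 expR0 /prodlam big_ord0.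
rewrite prodlamS (IH (ltnW Lv)) (take_nth i0 Lv) -cats1 logcontr_cat /logcontr big_seq1.
by rewrite opprD opprK expRD lnK // posrE; case/andP: (Hlam (nth i0 v L) c).
Qed.

End LogContraction.

Section WordConstruction.
Variables (R : realType) (N d : nat) (lam : 'I_N -> 'I_d.+1 -> R).
Hypothesis Hlam : forall i c, 0 < lam i c < 1.
Variables (s : {perm 'I_d.+1}) (i0 : 'I_N) (u : seq 'I_N) (I : 'I_d.+1 -> 'I_N).
Variables (th bmax bmin E T D : R).

Local Notation lc := (logcontr lam).

Hypothesis u_rate_gt0 : forall n : 'I_d.+1, 0 < lc u (s n).
Hypothesis th_ge0 : 0 <= th.
Hypothesis u_rate_ratio : forall j m : 'I_d.+1, (j < m)%N -> lc u (s j) <= th * lc u (s m).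
Hypothesis bmax_ub : forall i c, - ln (lam i c) <= bmax.
Hypothesis bmin_gt0 : 0 < bmin.
Hypothesis bmin_lb : forall i c, bmin <= - ln (lam i c).
Hypothesis D_gt0 : 0 < D.
(* A run of [I m] has at most [(D + lc u (s m) + bmax) / bmin] letters, each costing
   at most [bmax]. *)
Hypothesis E_ub : forall m : 'I_d.+1, (D + lc u (s m) + bmax) * (bmax / bmin) <= E.
Hypothesis T_gt0 : 0 < T.
Hypothesis T_large : th * (T + D + bmax) + d.+1%:R * E < T.

Definition window (j : 'I_d.+1) (v : seq 'I_N) (a b : nat) : Prop :=
  [/\ (a <= b <= size v)%N, forall l, (a <= l < b)%N -> nth i0 v l = I j,
      lc (take a v) (s j) < T & T + D <= lc (take b v) (s j)].

Definition stage (n : nat) (v : seq 'I_N) (st en : 'I_d.+1 -> nat) : Prop :=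
  [/\ forall j : 'I_d.+1, (n <= j)%N -> window j v (st j) (en j),
      forall a b : 'I_d.+1, (n <= a)%N -> (a < b)%N -> (en b <= st a)%N,
      exists K : nat, forall c,
        K%:R * lc u c <= lc v c <= K%:R * lc u c + (d.+1 - n)%:R * E
    & forall m : 'I_d.+1, m.+1 = n -> lc v (s m) < T].

Lemma bmax_ge0 : 0 <= bmax.
Proof. exact: le_trans (ltW (nln_lam_gt0 Hlam i0 ord0)) (bmax_ub _ _). Qed.

Lemma E_ge0 : 0 <= E.
Proof.
apply: le_trans (E_ub ord0); rewrite mulr_ge0 ?divr_ge0 ?bmax_ge0 ?(ltW bmin_gt0) //.
by rewrite addr_ge0 ?bmax_ge0 // addr_ge0 ?(logcontr_ge0 Hlam) // ltW.
Qed.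

Lemma window_catr j v v' a b : window j v a b -> window j (v ++ v') a b.
Proof.
case=> /andP[ab bv] letters lo hi; split.
- by rewrite ab size_cat (leq_trans bv (leq_addr _ _)).
- by move=> l /andP[al lb]; rewrite nth_cat (leq_trans lb bv) letters ?al.
- by rewrite takel_cat // (leq_trans ab bv).
- by rewrite takel_cat.
Qed.

Lemma window_nseq (m : 'I_d.+1) v k : lc v (s m) < T ->
  T + D <= lc v (s m) + k%:R * - ln (lam (I m) (s m)) ->
  window m (v ++ nseq k (I m)) (size v) (size (v ++ nseq k (I m))).
Proof.
move=> lo hi; split; rewrite ?take_size ?take_size_cat ?logcontr_cat ?logcontr_nseq //.
- by rewrite size_cat leq_addr leqnn.
- move=> l /andP[vl]; rewrite size_cat size_nseq => lk.
  by rewrite nth_cat ltnNge vl /= nth_nseq ltn_subLR // lk.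
Qed.

Lemma logcontr_nseq_le k i (c c' : 'I_d.+1) X : k%:R * - ln (lam i c') <= X ->
  lc (nseq k i) c <= X * (bmax / bmin).
Proof.
move=> kX; rewrite logcontr_nseq; apply: le_trans (ler_wpM2r _ kX).
  rewrite -mulrA ler_wpM2l // (le_trans (bmax_ub i c)) // mulrCA ler_peMr ?bmax_ge0 //.
  by rewrite ler_pdivlMr // mul1r.
by rewrite divr_ge0 ?bmax_ge0 ?ltW.
Qed.

Lemma extend_word (m : 'I_d.+1) v : lc v (s m) < T -> exists y (k a : nat),
  [/\ window m (v ++ y) (size v + a) (size (v ++ y)),
      forall c, k%:R * lc u c <= lc y c <= k%:R * lc u c + E
    & lc (v ++ y) (s m) < T + D + bmax].
Proof.
move=> vm_lt.
have [k /andP[k_lo k_hi]] := exists_crossing (u_rate_gt0 m) vm_lt.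
set v1 := v ++ flatten (nseq k u).
have v1E c : lc v1 c = lc v c + k%:R * lc u c by rewrite logcontr_cat logcontr_repeat.
have v1m_lt : lc v1 (s m) < T + D by rewrite v1E (lt_le_trans k_lo) // lerDl ltW.
have [k' /andP[k'_lo k'_hi]] := exists_crossing (nln_lam_gt0 Hlam (I m) (s m)) v1m_lt.
have b_le := bmax_ub (I m) (s m).
exists (flatten (nseq k u) ++ nseq k'.+1 (I m)), k, (size (flatten (nseq k u))); split.
- by rewrite catA -size_cat; apply: window_nseq => //; rewrite v1E.
- move=> c; rewrite logcontr_cat logcontr_repeat lerDl (logcontr_ge0 Hlam) lerD2l.
  apply: le_trans (E_ub m); apply: (@logcontr_nseq_le _ _ _ (s m)).
  by move: k_hi k'_lo; rewrite v1E !mulrSr !mulrDl !mul1r; lra.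
- by move: k'_lo; rewrite catA logcontr_cat logcontr_nseq !mulrSr mulrDl mul1r; lra.
Qed.

Lemma stage_init : stage d.+1 [::] (fun _ => 0%N) (fun _ => 0%N).
Proof.
split.
- by move=> j; rewrite leqNgt ltn_ord.
- by move=> a b; rewrite leqNgt ltn_ord.
- by exists 0%N => c; rewrite logcontr_nil subnn !mul0r addr0 lexx.
- by move=> m _; rewrite logcontr_nil.
Qed.

Lemma stage_step n v st en : (n < d.+1)%N -> stage n.+1 v st en ->
  exists v' st' en', stage n v' st' en'.
Proof.
move=> nd [wins ordered [K decomp] below]; set m := Ordinal nd.
have [y [k [a [win_m y_rate vy_lt]]]] := extend_word (below m erefl).
have old (j : 'I_d.+1) : (n <= j)%N -> j != m -> (n.+1 <= j)%N.
  by move=> nj jm; rewrite ltn_neqAle nj andbT; apply: contra jm => /eqP nj'; apply/eqP/val_inj.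
have decomp' : exists K' : nat, forall c,
    K'%:R * lc u c <= lc (v ++ y) c <= K'%:R * lc u c + (d.+1 - n)%:R * E.
  exists (K + k)%N => c; have /andP[vl vu] := decomp c; have /andP[yl yu] := y_rate c.
  move: vu; rewrite logcontr_cat natrD mulrDl subSS subSn // mulrSr mulrDl mul1r.
  by move=> vu; apply/andP; split; lra.
exists (v ++ y), (fun j => if j == m then (size v + a)%N else st j),
  (fun j => if j == m then size (v ++ y) else en j); split=> //.
- move=> j nj; case: eqP => [->|/eqP jm]; first exact: win_m.
  exact/window_catr/wins/old.
- move=> a' b' na' ab'.
  have b'm : (b' == m) = false.
    by apply/negbTE; apply: contraTneq ab' => ->; rewrite -leqNgt.
  rewrite b'm; case: eqP => [_|/eqP a'm]; last exact: ordered (old _ na' a'm) ab'.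
  have [/andP[_ envb] _ _ _] := wins b' (leq_ltn_trans na' ab').
  exact: leq_trans envb (leq_addr _ _).
- move=> m' m'n; have [K' decK'] := decomp'.
  have /andP[_ up] := decK' (s m'); have /andP[lo _] := decK' (s m).
  have m'm : (m' < m)%N by rewrite /= -m'n.
  have rate : K'%:R * lc u (s m') <= th * (K'%:R * lc u (s m)).
    by rewrite mulrCA ler_wpM2l // u_rate_ratio.
  have th_lo := ler_wpM2l th_ge0 lo; have th_vy := ler_wpM2l th_ge0 (ltW vy_lt).
  have E_le : (d.+1 - n)%:R * E <= d.+1%:R * E by rewrite ler_wpM2r ?E_ge0 // ler_nat leq_subr.
  apply: le_lt_trans up (le_lt_trans _ T_large); apply: lerD E_le.
  exact: le_trans rate (le_trans th_lo th_vy).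
Qed.

Lemma stage0_exists : exists v st en, stage 0 v st en.
Proof.
suff stages k : (k <= d.+1)%N -> exists v st en, stage (d.+1 - k) v st en.
  by have := stages d.+1 (leqnn _); rewrite subnn.
elim: k => [_|k IH kd].
  by exists [::], (fun _ => 0%N), (fun _ => 0%N); rewrite subn0; exact: stage_init.
have [v [st [en]]] := IH (ltnW kd); rewrite subSn //.
by apply: stage_step; rewrite ltnS leq_subr.
Qed.

End WordConstruction.

Section WindowRatio.
Variables (R : realType) (N d : nat) (lam t : 'I_N -> 'I_d.+1 -> R) (p : 'I_N -> R).
Hypothesis Hlam : forall i c, 0 < lam i c < 1.
Hypothesis Hdist : forall i j : 'I_N, i <> j ->
  ~ (forall x, ucube x -> affmap lam t i x = affmap lam t j x).
Hypothesis Hp : forall i, 0 < p i.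
Hypothesis Hp1 : \sum_(i : 'I_N) p i = 1.
Variables (s : {perm 'I_d.+1}) (i0 : 'I_N) (I : 'I_d.+1 -> 'I_N) (bmax T D : R).
Hypothesis I_max : forall n : 'I_d.+1, InI lam t s n.+1 (I n) /\
  \big[Num.max/0]_(i | InI lam t s n.+1 i) Sbar_term lam t s p n i
    = Sbar_term lam t s p n (I n).
Hypothesis bmax_ub : forall i c, - ln (lam i c) <= bmax.
Hypothesis D_gt0 : 0 < D.

Local Notation Lidx := (Lidx lam).

Local Notation R1 := (expR (- T)).
Local Notation r1 := (expR (- (T + D))).

Lemma r1_le_R1 : r1 <= R1.
Proof. by rewrite ler_expR lerN2 lerDl ltW. Qed.

Lemma window_Lidx v j a b : window lam s i0 I T D j v a b ->
  let w := nth i0 v in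
  [/\ (a < Lidx w R1 (s j))%N, (Lidx w R1 (s j) <= Lidx w r1 (s j))%N,
      (Lidx w r1 (s j) <= b)%N & prodlam lam w (s j) b <= r1].
Proof.
case=> /andP[ab bv] _ lo hi w.
have b_le : prodlam lam w (s j) b <= r1 by rewrite (prodlam_logcontr Hlam) // ler_expR lerN2.
have a_gt : R1 < prodlam lam w (s j) a.
  by rewrite (prodlam_logcontr Hlam) ?(leq_trans ab bv) // ltr_expR ltrN2.
split=> //; last by rewrite (Lidx_leP Hlam _ b_le).
  by rewrite ltnNge (Lidx_leP Hlam _ (le_trans b_le r1_le_R1)) -ltNge.
exact: (Lidx_le_anti Hlam r1_le_R1 b_le).
Qed.

Lemma windows_ratio_ge (v : seq 'I_N) (st en : 'I_d.+1 -> nat) :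
  (forall j : 'I_d.+1, window lam s i0 I T D j v (st j) (en j)) ->
  (forall a b : 'I_d.+1, (a < b)%N -> (en b <= st a)%N) ->
  expR (- (Sbar lam t p s * bmax)) * expR D `^ Sbar lam t p s
    <= muB lam t p (nth i0 v) R1 / muB lam t p (nth i0 v) r1.
Proof.
move=> wins ordered; set w := nth i0 v.
set LR := fun n => Lidx w R1 (s n); set Lr := fun n => Lidx w r1 (s n).
have scales n := window_Lidx (wins n).
have Lr_lt_LR (a b : 'I_d.+1) : (a < b)%N -> (Lr b < LR a)%N.
  move=> ab; have [_ _ Lr_en _] := scales b; have [st_LR _ _ _] := scales a.
  exact: leq_ltn_trans (leq_trans Lr_en (ordered _ _ ab)) st_LR.
have oR : cube_order lam w R1 = s.
  apply: cube_order_eq => a b ab; have [_ LRr _ _] := scales b.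
  exact: leq_ltn_trans LRr (Lr_lt_LR _ _ ab).
have or : cube_order lam w r1 = s.
  apply: cube_order_eq => a b ab; have [_ LRr _ _] := scales a.
  exact: leq_trans (Lr_lt_LR _ _ ab) LRr.
have letters n l : (LR n <= l < Lr n)%N -> w l = I n.
  case/andP=> LRl lLr; have [st_LR _ Lr_en _] := scales n; have [_ in_win _ _] := wins n.
  by apply: in_win; rewrite (leq_trans (ltnW st_LR) LRl) (leq_trans lLr Lr_en).
have LRr c : (Lidx w R1 c <= Lidx w r1 c)%N.
  by have [_ LRr _ _] := scales (s^-1 c)%g; rewrite /LR /Lr permKV in LRr.
have LR_Lr a b ab : (Lr b <= LR a)%N := ltnW (Lr_lt_LR a b ab).
apply: le_trans (muB_ratio_ge Hdist Hp Hp1 oR or LRr LR_Lr letters).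
have Sbar_E : Sbar lam t p s = \sum_(n < d.+1) Sbar_term lam t s p n (I n).
  by apply: eq_bigr => n _; case: (I_max n).
rewrite -expRM -expRD.
have -> : - (Sbar lam t p s * bmax) + D * Sbar lam t p s =
    \sum_(n < d.+1) Sbar_term lam t s p n (I n) * (D - bmax).
  by rewrite -big_distrl /= -Sbar_E; lra.
rewrite expR_sum; apply: ler_prod => n _; rewrite expR_ge0 /=.
have [In _] := I_max n; have [st_LR _ _ en_le] := scales n.
rewrite (class_mass_ratioE Hdist Hp Hp1 Hlam In) -expRM_natl ler_expR mulrCA.
rewrite ler_wpM2l ?(Sbar_term_ge0 Hdist Hp Hp1 Hlam In) //.
have := Lidx_window_gt Hlam (expR_gt0 _) r1_le_R1 en_le (leq_ltn_trans (leq0n _) st_LR)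
  (letters n) (bmax_ub^~ (s n)).
by rewrite !expRK; lra.
Qed.

End WindowRatio.

Section RatioBound.
Variables (R : realType) (N d : nat) (lam t : 'I_N -> 'I_d.+1 -> R) (p : 'I_N -> R).
Hypothesis Hlam : forall i c, 0 < lam i c < 1.
Hypothesis Hdist : forall i j : 'I_N, i <> j ->
  ~ (forall x, ucube x -> affmap lam t i x = affmap lam t j x).
Hypothesis Hp : forall i, 0 < p i.
Hypothesis Hp1 : \sum_(i : 'I_N) p i = 1.

Local Notation lc := (logcontr lam).

Lemma inB_rates s : inB lam s -> exists2 u : seq 'I_N, u != [::] &
  forall a b : 'I_d.+1, (a < b)%N -> lc u (s a) < lc u (s b).
Proof.
case=> w0 [r0 [_]]; rewrite /strict_ordered /=; set L0 := Lidx lam w0 r0 (s ord_max) => ordered.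
exists (mkseq w0 (maxn L0 1)) => [|a b ab]; first by rewrite -size_eq0 size_mkseq -lt0n leq_maxr.
have := ordered a b ab; have [->|L0_gt0] := posnP L0; first by rewrite /prodlam !big_ord0 ltxx.
have prodlamE c : prodlam lam w0 c L0 = expR (- lc (mkseq w0 L0) c).
  rewrite -[in RHS](take_size (mkseq w0 L0)) size_mkseq.
  rewrite -(prodlam_logcontr Hlam (w0 0%N)) ?size_mkseq //.
  by apply: eq_bigr => l _; rewrite nth_mkseq.
by rewrite (maxn_idPl L0_gt0) !prodlamE ltr_expR ltrN2.
Qed.

Lemma ratio_lower_bound s : inB lam s -> exists bmax : R, forall D : R, 0 < D ->
  exists (T : R) (w : Sigma N), 0 < T /\
    expR (- (Sbar lam t p s * bmax)) * expR D `^ Sbar lam t p s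
      <= muB lam t p w (expR (- T)) / muB lam t p w (expR (- (T + D))).
Proof.
move=> sB; have [w0 _] := sB; pose i0 := w0 0%N.
have [u u_ne u_incr] := inB_rates sB.
have u_rate_gt0 n : 0 < lc u (s n) := logcontr_gt0 Hlam _ u_ne.
have [th th_bounds u_rate_ratio] :=
  increasing_ratio_bound (f := fun n => lc u (s n)) u_rate_gt0 u_incr.
have /andP[th_ge0 _] := th_bounds.
have [bmin [bmax [bmin_gt0 bmax_ge0 bmin_lb bmax_ub]]] := nln_lam_bounds Hlam.
have [amax amax_ge0 amax_ub] := fin_ub (fun n : 'I_d.+1 => lc u (s n)).
have [I I_max] := choice (fun n => Sbar_max_attained s Hdist Hp Hp1 Hlam n i0).
exists bmax => D D_gt0.
pose E := (D + amax + bmax) * (bmax / bmin).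
have E_ub m : (D + lc u (s m) + bmax) * (bmax / bmin) <= E.
  by rewrite ler_wpM2r ?divr_ge0 ?(ltW bmin_gt0) // lerD2r lerD2l amax_ub.
have E_ge0 : 0 <= E by rewrite mulr_ge0 ?divr_ge0 ?addr_ge0 ?(ltW bmin_gt0) ?(ltW D_gt0).
have [T T_gt0 T_large] := exists_contraction_margin th_bounds
  (addr_ge0 (ltW D_gt0) bmax_ge0) (mulr_ge0 (ler0n _ d.+1) E_ge0).
rewrite addrA in T_large.
have [v [st [en [wins ordered _ _]]]] := stage0_exists Hlam i0 I u_rate_gt0 th_ge0
  u_rate_ratio bmax_ub bmin_gt0 bmin_lb D_gt0 E_ub T_gt0 T_large.
exists T, (nth i0 v); split => //.
exact: (windows_ratio_ge Hlam Hdist Hp Hp1 I_max bmax_ub D_gt0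
  (fun j => wins j (leq0n j)) (fun a b => ordered a b (leq0n a))).
Qed.

End RatioBound.

Theorem proposition6p2 (R : realType) (N d : nat)
  (lam t : 'I_N -> 'I_d.+1 -> R) (p : 'I_N -> R)
  (Hlam : forall i c, 0 < lam i c < 1)
  (Hcube : forall i x, ucube x -> ucube (affmap lam t i x))
  (Hdist : forall i j : 'I_N, i <> j ->
             ~ (forall x, ucube x -> affmap lam t i x = affmap lam t j x))
  (Hdiff : forall m n : 'I_d.+1, m <> n -> exists i, lam i n <> lam i m)
  (Hp : forall i, 0 < p i) (Hp1 : \sum_(i : 'I_N) p i = 1) :
  forall s : {perm 'I_d.+1}, inB lam s ->
  exists c : R, 0 < c /\
  exists (Rs rs : nat -> R) (ws : nat -> Sigma N),
    (forall k, 0 < Rs k < 1 /\ 0 < rs k < 1) /\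
    ((fun k => Rs k / rs k) @ \oo --> +oo) /\
    (forall k, c * (Rs k / rs k) `^ (Sbar lam t p s)
               <= muB lam t p (ws k) (Rs k) / muB lam t p (ws k) (rs k)).
Proof.
move=> s sB; have [bmax scales] := ratio_lower_bound Hlam Hdist Hp Hp1 sB.
exists (expR (- (Sbar lam t p s * bmax))); split; first exact: expR_gt0.
have [T T_spec] := choice (fun k : nat => scales k.+1%:R (ltr0Sn _ k)).
have [w bound] := choice T_spec.
pose Rs k := expR (- T k); pose rs k := expR (- (T k + k.+1%:R)).
have ratioE k : Rs k / rs k = expR k.+1%:R.
  by rewrite /Rs /rs [X in _ / X]expRN invrK -expRD addKr.
exists Rs, rs, w; split; [|split].
- move=> k; have [T_gt0 _] := bound k.
  by rewrite /Rs /rs !expR_gt0 !expR_lt1 !oppr_lt0 T_gt0 (addr_gt0 T_gt0 (ltr0Sn _ k)).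
- apply: (@ger_cvgy _ _ _ _ (fun k : nat => k%:R)); last exact: cvgr_idn.
  apply: nearW => k; rewrite ratioE; apply: le_trans (expR_ge1Dx _).
  by rewrite -natr1; lra.
- by move=> k; rewrite ratioE; case: (bound k).
Qed.
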